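(* Let $I\subset\mathbb{R}$ be an interval, $\psi:I\to\mathbb{R}$ a non-decreasing convex function, $n\ge2$, $a=(a_1,\dots,a_n)\in I^n$ a relative convex sequence, and $t=(t_1,\dots,t_n)\in T_a$. Let $p=(p_1,\dots,p_n)\in[0,\infty)^n$ with $P_n=\sum p_i>0$ and assume $M_{n,p}(t)<t_n$ (i.e. $p_i>0$ for some $i<n$). Put $$m=\lfloor M_{n,p}(t)\rfloor_t,\quad \gamma_t=\frac{M_{n,p}(t)-t_m}{t_{m+1}-t_m},\quad \lambda_t=\frac{t_n-M_{n,p}(t)}{t_n-t_1}.$$ Then $$\gamma_t\,\psi(a_{m+1})+(1-\gamma_t)\,\psi(a_m)\le\frac1{P_n}\sum_{i=1}^n p_i\psi(a_i)\le \lambda_t\,\psi(a_1)+(1-\lambda_t)\,\psi(a_n).$$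
   Context: For a real sequence $(x_i)$, $\Delta x_i=x_{i+1}-x_i$. ''Increasing'' means strictly increasing. For a real sequence $a=(a_i)_{i=1}^n$, $T_a$ denotes the set of increasing real sequences $(t_i)_{i=1}^n$ such that $(\Delta a_i/\Delta t_i)_{i=1}^{n-1}$ is non-decreasing; $a$ is relative convex if $T_a\ne\emptyset$. $M_{n,p}(t)=\frac1{P_n}\sum_{i=1}^n p_it_i$. For an increasing sequence $t=(t_1,\dots,t_n)$ and $q\in[t_1,t_n]$, $\lfloor q\rfloor_t$ denotes the index $i$ of the largest $t_i$ with $t_i\le q$. *)

(* Sequences x = (x_1,...,x_n) are functions nat -> R,
   only the values at indices 1..n matter. *)
From mathcomp Require Import all_boot all_order all_algebra.
Set Implicit Arguments. Unset Strict Implicit. Unset Printing Implicit Defensive.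
Import Order.TTheory GRing.Theory Num.Theory.
Local Open Scope ring_scope.

Section Defs.
Variable R : realFieldType.

Definition convex_on (I : interval R) (psi : R -> R) : Prop :=
  forall x y l, x \in I -> y \in I -> 0 <= l -> l <= 1 ->
    psi (l * x + (1 - l) * y) <= l * psi x + (1 - l) * psi y.

Definition nondecr_on (I : interval R) (psi : R -> R) : Prop :=
  forall x y, x \in I -> y \in I -> x <= y -> psi x <= psi y.

Definition Delta (x : nat -> R) (i : nat) : R := x i.+1 - x i.

Definition increasing_seq (n : nat) (t : nat -> R) : Prop :=
  forall i, (1 <= i)%N -> (i < n)%N -> t i < t i.+1.

Definition in_T (n : nat) (a t : nat -> R) : Prop :=
  increasing_seq n t /\
  forall i, (1 <= i)%N -> (i.+1 < n)%N ->
    Delta a i / Delta t i <= Delta a i.+1 / Delta t i.+1.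

Definition relative_convex (n : nat) (a : nat -> R) : Prop :=
  exists t, in_T n a t.

Definition Psum (n : nat) (p : nat -> R) : R := \sum_(1 <= i < n.+1) p i.

Definition Mnp (n : nat) (p t : nat -> R) : R :=
  (Psum n p)^-1 * \sum_(1 <= i < n.+1) p i * t i.

Definition floor_idx (n : nat) (t : nat -> R) (q : R) : nat :=
  \max_(1 <= i < n.+1 | t i <= q) i.

End Defs.

From mathcomp Require Import all_boot all_order all_algebra.
From mathcomp Require Import ring lra zify.
Import Order.TTheory GRing.Theory Num.Theory.
Set Implicit Arguments. Unset Strict Implicit. Unset Printing Implicit Defensive.
Local Open Scope ring_scope.

(* Write b_i = psi(a_i) and view the points (t_i, b_i).
   1. Since psi is non-decreasing and convex and the slopes of a w.r.t. t are
      non-decreasing, the slopes of b w.r.t. t are non-decreasing as well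
      (a three-point inequality for psi, [slope_comp_mono]).
   2. For a sequence with non-decreasing slopes, the line through (t_i, b_i)
      whose slope is one of the two slopes adjacent to i lies below every point
      (t_j, b_j) ([support_line]); consequently every point lies below the chord
      joining (t_1, b_1) and (t_n, b_n) ([below_chord]).
   3. Weighted means are monotone and commute with affine maps of t
      ([wmean_le], [wmean_affine]).  Averaging the support line at
      m = floor(M_{n,p}(t)) with slope (b_{m+1}-b_m)/(t_{m+1}-t_m) gives the
      lower bound (only 1 <= m < n is needed, [floor_idx_range]); averaging
      the chord gives the upper bound.
   The hypothesis [relative_convex n a] is implied by [in_T n a t] and unused. *)

Definition slope (R : realFieldType) (b t : nat -> R) (k : nat) : R :=
  Delta b k / Delta t k.

Lemma ler_pdiv_cross (R : realFieldType) (u v h1 h2 : R) :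
  0 < h1 -> 0 < h2 -> (u / h1 <= v / h2) = (h2 * u <= h1 * v).
Proof.
move=> h1_gt0 h2_gt0.
by rewrite ler_pdivrMr // mulrAC ler_pdivlMr // [h1 * v]mulrC [h2 * u]mulrC.
Qed.

Lemma mem_itv_between (R : realFieldType) (I : interval R) (x z c : R) :
  x \in I -> z \in I -> x <= c -> c <= z -> c \in I.
Proof.
case: I => bl br; rewrite !itv_boundlr => /andP[xl _] /andP[_ zr] xc cz.
by apply/andP; split; [apply: le_trans xl _ | apply: le_trans zr]; rewrite bnd_simp.
Qed.

Lemma nondecr_convex_three_point (R : realFieldType) (I : interval R) (psi : R -> R)
    (x y z h1 h2 : R) :
  nondecr_on I psi -> convex_on I psi ->
  x \in I -> y \in I -> z \in I -> 0 < h1 -> 0 < h2 ->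
  h2 * (y - x) <= h1 * (z - y) ->
  h2 * (psi y - psi x) <= h1 * (psi z - psi y).
Proof.
move=> psi_nd psi_cv xI yI zI h1_gt0 h2_gt0 slopes.
have h_gt0 : 0 < h1 + h2 by rewrite addr_gt0.
pose mu := h2 / (h1 + h2).
have mu_ge0 : 0 <= mu by rewrite divr_ge0 // ltW.
have mu_le1 : mu <= 1 by rewrite ler_pdivrMr // mul1r lerDr ltW.
pose c := mu * x + (1 - mu) * z.
have c_def : c * (h1 + h2) = h2 * x + h1 * z.
  by rewrite /c /mu; field; rewrite gt_eqF.
have cI : c \in I.
  have [xz | zx] := lerP x z.
  - have e1 : 0 <= mu * (z - x) by apply: mulr_ge0 => //; rewrite subr_ge0.
    have e2 : 0 <= (1 - mu) * (z - x) by apply: mulr_ge0 => //; rewrite subr_ge0.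
    apply: (mem_itv_between xI zI); rewrite /c; lra.
  - have {}zx := ltW zx.
    have e1 : 0 <= mu * (x - z) by apply: mulr_ge0 => //; rewrite subr_ge0.
    have e2 : 0 <= (1 - mu) * (x - z) by apply: mulr_ge0 => //; rewrite subr_ge0.
    apply: (mem_itv_between zI xI); rewrite /c; lra.
have yc : y <= c.
  rewrite -(ler_pM2r h_gt0) c_def; lra.
have psi_c : psi y <= mu * psi x + (1 - mu) * psi z.
  exact: le_trans (psi_nd _ _ yI cI yc) (psi_cv _ _ _ xI zI mu_ge0 mu_le1).
have := ler_wpM2r (ltW h_gt0) psi_c.
have -> : (mu * psi x + (1 - mu) * psi z) * (h1 + h2) = h2 * psi x + h1 * psi z.
  by rewrite /mu; field; rewrite gt_eqF.
lra.
Qed.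

Lemma slope_comp_mono (R : realFieldType) (I : interval R) (psi : R -> R)
    (n : nat) (a t : nat -> R) :
  nondecr_on I psi -> convex_on I psi ->
  (forall i, (1 <= i <= n)%N -> a i \in I) -> in_T n a t ->
  forall k, (1 <= k)%N -> (k.+1 < n)%N ->
  slope (psi \o a) t k <= slope (psi \o a) t k.+1.
Proof.
move=> psi_nd psi_cv aI [t_inc a_slopes] k k_ge1 k_lt.
have h1_gt0 : 0 < Delta t k by rewrite subr_gt0 t_inc //; lia.
have h2_gt0 : 0 < Delta t k.+1 by rewrite subr_gt0 t_inc //; lia.
rewrite /slope ler_pdiv_cross //.
apply: (nondecr_convex_three_point psi_nd psi_cv); rewrite ?aI //; try lia.
by rewrite -ler_pdiv_cross //; apply: a_slopes.
Qed.

Lemma sub_le_Delta (R : realFieldType) (f g : nat -> R) (j i : nat) :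
  (j <= i)%N -> (forall k, (j <= k < i)%N -> Delta f k <= Delta g k) ->
  f i - f j <= g i - g j.
Proof. by move=> ji fg; rewrite -!telescope_sumr //; apply: ler_sum_nat. Qed.

Section NondecreasingSlopes.
(* A sequence b whose slopes w.r.t. the increasing sequence t are
   non-decreasing: the discrete analogue of a convex function of t. *)
Variables (R : realFieldType) (n : nat) (t b : nat -> R).
Hypothesis t_inc : increasing_seq n t.
Hypothesis b_slopes : forall k, (1 <= k)%N -> (k.+1 < n)%N ->
  slope b t k <= slope b t k.+1.

Lemma Delta_t_gt0 k : (1 <= k < n)%N -> 0 < Delta t k.
Proof. by move=> /andP[k_ge1 k_lt]; rewrite subr_gt0 t_inc. Qed.

Lemma t_le (j i : nat) : (1 <= j)%N -> (j <= i <= n)%N -> t j <= t i.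
Proof.
move=> j_ge1 /andP[ji i_le]; rewrite -subr_ge0 -[0](subrr (0 : R)).
apply: (sub_le_Delta (f := fun=> 0)) => // k /andP[jk ki].
by rewrite /Delta subrr ltW // Delta_t_gt0 //; apply/andP; split; lia.
Qed.

Lemma t1_lt_tn : (2 <= n)%N -> t 1%N < t n.
Proof.
by move=> n_ge2; rewrite (lt_le_trans (t_inc (isT : (1 <= 1)%N) _)) ?t_le //; lia.
Qed.

Lemma slope_mono (j k : nat) : (1 <= j)%N -> (j <= k)%N -> (k < n)%N ->
  slope b t j <= slope b t k.
Proof.
move=> j_ge1 jk k_lt.
have mono : {in [pred i | (1 <= i < n)%N] &,
    {homo slope b t : i j / (i <= j)%N >-> i <= j}}.
  apply: homo_leq_in => [x | y x z | x y xD yD z /andP[xz zy] | i].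
  - exact: le_refl.
  - exact: le_trans.
  - by move: xD yD; rewrite !inE => /andP[x1 _] /andP[_ yn]; apply/andP; split; lia.
  - by rewrite !inE => /andP[i1 _] /andP[_ i_lt]; apply: b_slopes.
by apply: mono; rewrite // inE; apply/andP; split; lia.
Qed.

Lemma support_line (i k0 : nat) : (1 <= i <= n)%N -> (1 <= k0 < n)%N ->
  (i.-1 <= k0 <= i)%N ->
  forall j, (1 <= j <= n)%N -> b i + slope b t k0 * (t j - t i) <= b j.
Proof.
move=> i_rng k0_rng k0_adj j j_rng.
set d := slope b t k0.
have Delta_dt k : (1 <= k < n)%N ->
    Delta (fun l => d * t l) k = d * Delta t k /\
    Delta b k = slope b t k * Delta t k.
  move=> k_rng; split; first by rewrite /Delta mulrBr.
  by rewrite /slope divfK // gt_eqF // Delta_t_gt0.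
have [ij | ji] := leqP i j.
- suff : d * t j - d * t i <= b j - b i by rewrite mulrBr; lra.
  apply: (sub_le_Delta (f := fun l => d * t l)) => // k k_rng.
  have [-> ->] := Delta_dt k ltac:(lia).
  by rewrite ler_pM2r ?Delta_t_gt0 //; [apply: slope_mono | ]; lia.
- suff : b i - b j <= d * t i - d * t j by rewrite mulrBr; lra.
  apply: (sub_le_Delta (g := fun l => d * t l)); first lia.
  move=> k k_rng; have [-> ->] := Delta_dt k ltac:(lia).
  by rewrite ler_pM2r ?Delta_t_gt0 //; [apply: slope_mono | ]; lia.
Qed.

Lemma below_chord (j : nat) : (2 <= n)%N -> (1 <= j <= n)%N ->
  b j <= b 1%N + (b n - b 1%N) / (t n - t 1%N) * (t j - t 1%N).
Proof.
move=> n_ge2 j_rng.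
have supp := support_line (k0 := maxn 1 j.-1) j_rng ltac:(lia) ltac:(lia).
have left_end := supp 1%N ltac:(lia).
have right_end := supp n ltac:(lia).
set d := slope b t (maxn 1 j.-1) in left_end right_end.
have tj_ge : 0 <= t j - t 1%N by rewrite subr_ge0 t_le //; lia.
have tj_le : 0 <= t n - t j by rewrite subr_ge0 t_le //; lia.
have tn_gt : 0 < t n - t 1%N by rewrite subr_gt0 t1_lt_tn.
have key : (b j - b 1%N) * (t n - t 1%N) <= (b n - b 1%N) * (t j - t 1%N) by nra.
by rewrite -lerBlDl mulrAC ler_pdivlMr.
Qed.
End NondecreasingSlopes.

Section WeightedMean.
Variables (R : realFieldType) (n : nat) (p : nat -> R).
Hypothesis p_ge0 : forall i, (1 <= i <= n)%N -> 0 <= p i.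
Hypothesis Psum_gt0 : 0 < Psum n p.

Definition wmean (f : nat -> R) : R :=
  (Psum n p)^-1 * \sum_(1 <= i < n.+1) p i * f i.

Lemma wmean_le (f g : nat -> R) :
  (forall i, (1 <= i <= n)%N -> f i <= g i) -> wmean f <= wmean g.
Proof.
move=> fg; apply: ler_wpM2l; first by rewrite invr_ge0 ltW.
apply: ler_sum_nat => i i_rng; apply: ler_wpM2l; [apply: p_ge0 | apply: fg]; lia.
Qed.

Lemma wmean_affine (al be : R) (f : nat -> R) :
  wmean (fun i => al + be * f i) = al + be * wmean f.
Proof.
rewrite /wmean.
have -> : \sum_(1 <= i < n.+1) p i * (al + be * f i) =
    al * Psum n p + be * \sum_(1 <= i < n.+1) p i * f i.
  by rewrite /Psum !mulr_sumr -big_split; apply: eq_bigr => i _ /=; ring.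
by field; rewrite gt_eqF.
Qed.
End WeightedMean.

Lemma floor_idx_range (R : realFieldType) (n : nat) (t : nat -> R) (q : R) :
  (1 <= n)%N -> t 1%N <= q -> q < t n ->
  (1 <= floor_idx n t q < n)%N.
Proof.
move=> n_ge1 t1_le lt_tn; set m := floor_idx n t q.
have m_ge1 : (1 <= m)%N.
  apply: (leq_bigmax_seq (F := id)) => //.
  by rewrite mem_index_iota; lia.
have m_attained : m = 0%N \/ ((1 <= m <= n)%N /\ t m <= q).
  rewrite /m /floor_idx big_seq_cond.
  apply: (big_ind (fun x => x = 0%N \/ ((1 <= x <= n)%N /\ t x <= q))).
  - by left.
  - by move=> x y x_ok y_ok; case: (leqP x y).
  - by move=> i /andP[]; rewrite mem_index_iota => i_rng ti_le; right; split => //; lia.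
have [m0 | [m_rng tm_le]] := m_attained; first by rewrite m0 in m_ge1.
rewrite m_ge1 /= ltn_neqAle; apply/andP; split; last by lia.
by apply: contraTneq tm_le => ->; rewrite -ltNge.
Qed.

Theorem theorem4p3 (R : realFieldType) (I : interval R) (psi : R -> R)
  (n : nat) (a t p : nat -> R) :
  nondecr_on I psi -> convex_on I psi ->
  (2 <= n)%N ->
  (forall i, (1 <= i <= n)%N -> a i \in I) ->
  relative_convex n a ->
  in_T n a t ->
  (forall i, (1 <= i <= n)%N -> 0 <= p i) ->
  0 < Psum n p ->
  Mnp n p t < t n ->
  let m := floor_idx n t (Mnp n p t) in
  let gamma := (Mnp n p t - t m) / (t m.+1 - t m) in
  let lambda := (t n - Mnp n p t) / (t n - t 1%N) in
  gamma * psi (a m.+1) + (1 - gamma) * psi (a m)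
    <= (Psum n p)^-1 * \sum_(1 <= i < n.+1) p i * psi (a i)
  /\ (Psum n p)^-1 * \sum_(1 <= i < n.+1) p i * psi (a i)
    <= lambda * psi (a 1%N) + (1 - lambda) * psi (a n).
Proof.
move=> psi_nd psi_cv n_ge2 aI _ a_T p_ge0 Psum_gt0 M_lt m gamma lambda.
have [t_inc _] := a_T.
have b_slopes := slope_comp_mono psi_nd psi_cv aI a_T.
change ((Psum n p)^-1 * _) with (wmean n p (psi \o a)).
have M_def : wmean n p t = Mnp n p t := erefl.
have M_ge : t 1%N <= Mnp n p t.
  rewrite -[t 1%N]addr0 -(mul0r (Mnp n p t)) -wmean_affine //.
  by apply: wmean_le => // i i_rng; rewrite mul0r addr0 (t_le t_inc) //; lia.
have /andP[m_ge1 m_lt] := floor_idx_range (ltnW n_ge2) M_ge M_lt.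
split.
- set d := slope (psi \o a) t m.
  have low : wmean n p (fun j => (psi (a m) - d * t m) + d * t j) <=
             wmean n p (psi \o a).
    apply: wmean_le => // j j_rng.
    have := support_line t_inc b_slopes (i := m) (k0 := m) ltac:(lia) ltac:(lia)
      ltac:(lia) j_rng; rewrite /= -/d; lra.
  have low_eq : wmean n p (fun j => (psi (a m) - d * t m) + d * t j) =
                gamma * psi (a m.+1) + (1 - gamma) * psi (a m).
    rewrite wmean_affine // M_def /d /slope /Delta /gamma /=.
    by field; rewrite subr_eq0 gt_eqF // t_inc.
  by rewrite -low_eq.
- set c := (psi (a n) - psi (a 1%N)) / (t n - t 1%N).
  have up : wmean n p (psi \o a) <=
            wmean n p (fun j => (psi (a 1%N) - c * t 1%N) + c * t j).
    apply: wmean_le => // j j_rng.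
    have := below_chord t_inc b_slopes n_ge2 j_rng; rewrite /= -/c; lra.
  have up_eq : wmean n p (fun j => (psi (a 1%N) - c * t 1%N) + c * t j) =
               lambda * psi (a 1%N) + (1 - lambda) * psi (a n).
    have tn_gt : 0 < t n - t 1%N by rewrite subr_gt0 (t1_lt_tn t_inc).
    by rewrite wmean_affine // M_def /c /lambda; field; rewrite gt_eqF.
  by rewrite -up_eq.
Qed.
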